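(* Consider the $N$-SP bandwidth allocation game with minimum small-cell bandwidth constraints described in the context, and let $a=N_f\lambda_S^{1/\alpha-1}$. If $$\frac{a}{a+N_m}\sum_{i\in\mathcal N}B_i<\sum_{i\in\mathcal N}B_{i,S}^0,$$ then $\mathrm{SW}_{\mathrm{w}}^{\mathrm{NE}}<\mathrm{SW}_{\mathrm{wo}}^{*}$ (a social welfare loss is incurred). Moreover, in all cases $$\frac{\mathrm{SW}_{\mathrm{w}}^{\mathrm{NE}}}{\mathrm{SW}_{\mathrm{wo}}^{*}}\ge\Big(\frac{a}{a+N_m}\Big)^{\alpha},$$ and this bound is attained exactly when $B_{i,S}^0=B_i$ for all $i\in\mathcal N$.
   Context: A set $\mathcal N$ of $N$ service providers (SPs). SP $i$ owns bandwidth $B_i>0$ and chooses macro-cell bandwidth $B_{i,M}\ge0$ and small-cell bandwidth $B_{i,S}$ with $B_{i,M}+B_{i,S}\le B_i$ and $B_{i,S}\ge B_{i,S}^0$ (regulatory constraint), where $0\le B_{i,S}^0\le B_i$ are given. Parameters: $R_0>0$, $\lambda_S>1$, a mass $N_m>0$ of mobile users (served only by macro-cells) and a mass $N_f>0$ of fixed users, each with utility $u(r)=r^{1-\alpha}/(1-\alpha)$, $\alpha\in(0,1)$. Second-stage prices are market-clearing: with $R_M=\frac{R_0\sum_iB_{i,M}}{N_m}$ and $R_S=\frac{\lambda_SR_0\sum_iB_{i,S}}{N_f}$, the macro and small-cell prices are $u'(R_M)=R_M^{-\alpha}$ and $u'(R_S)=R_S^{-\alpha}$, and each mobile user receives rate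 $R_M$ and each fixed user rate $R_S$. SP $i$'s payoff in the bandwidth game is its revenue $S_i=\lambda_SB_{i,S}R_0R_S^{-\alpha}+B_{i,M}R_0R_M^{-\alpha}$. Social welfare is $\mathrm{SW}=N_mu(R_M)+N_fu(R_S)$. $\mathrm{SW}_{\mathrm{w}}^{\mathrm{NE}}$ denotes the social welfare at the Nash equilibrium of the game with the regulatory constraints, and $\mathrm{SW}_{\mathrm{wo}}^{*}$ the social welfare at the Nash equilibrium of the game without them ($B_{i,S}^0=0$), which equals the maximal social welfare without constraints. *)

From HB Require Import structures.
From mathcomp Require Import all_boot all_order all_algebra.
From mathcomp Require Import all_classical all_reals all_analysis.
Set Implicit Arguments. Unset Strict Implicit. Unset Printing Implicit Defensive.
Import Order.TTheory GRing.Theory Num.Theory.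
Local Open Scope ring_scope.

(* A strategy profile: SP i plays (B_{i,M}, B_{i,S}) = (p i).1, (p i).2. *)
Definition profile (R : realType) (n : nat) := 'I_n -> R * R.

Definition deviate (R : realType) (n : nat) (p : profile R n) (i : 'I_n) (s : R * R)
  : profile R n := fun j => if j == i then s else p j.

Definition rateM (R : realType) (n : nat) (R0 Nm : R) (p : profile R n) : R :=
  R0 * (\sum_(j < n) (p j).1) / Nm.
Definition rateS (R : realType) (n : nat) (R0 lamS Nf : R) (p : profile R n) : R :=
  lamS * R0 * (\sum_(j < n) (p j).2) / Nf.

(* utility u(r) = r^(1-alpha)/(1-alpha); price u'(r) = r^(-alpha) *)
Definition util (R : realType) (alpha r : R) : R := r `^ (1 - alpha) / (1 - alpha).
Definition price (R : realType) (alpha r : R) : R := r `^ (- alpha).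

Definition revenue (R : realType) (n : nat) (R0 lamS Nm Nf alpha : R)
  (p : profile R n) (i : 'I_n) : R :=
  lamS * (p i).2 * R0 * price alpha (rateS R0 lamS Nf p)
  + (p i).1 * R0 * price alpha (rateM R0 Nm p).

Definition social_welfare (R : realType) (n : nat) (R0 lamS Nm Nf alpha : R)
  (p : profile R n) : R :=
  Nm * util alpha (rateM R0 Nm p) + Nf * util alpha (rateS R0 lamS Nf p).

Definition feasible (R : realType) (Bi B0i : R) (s : R * R) : Prop :=
  0 <= s.1 /\ B0i <= s.2 /\ s.1 + s.2 <= Bi.

Definition is_NE (R : realType) (n : nat) (R0 lamS Nm Nf alpha : R)
  (B B0 : 'I_n -> R) (p : profile R n) : Prop :=
  (forall i, feasible (B i) (B0 i) (p i)) /\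
  (forall i (s : R * R), feasible (B i) (B0 i) s ->
     revenue R0 lamS Nm Nf alpha (deviate p i s) i
       <= revenue R0 lamS Nm Nf alpha p i).

From HB Require Import structures.
From mathcomp Require Import all_boot all_order all_algebra.
From mathcomp Require Import all_classical all_reals all_analysis.
From mathcomp Require Import ring lra.
Import Order.TTheory GRing.Theory Num.Theory.
Local Open Scope ring_scope.
Set Implicit Arguments. Unset Strict Implicit. Unset Printing Implicit Defensive.

(* At an equilibrium every SP uses all of its bandwidth, and shifting a little bandwidth
   between its macro and small cells is unprofitable.  Since [price] is convex, this gives
   first-order conditions on marginal revenues; summed over the SPs they show that the
   weighted unit price of small-cell bandwidth is at most the macro one as soon as some
   macro bandwidth is used, with equality when there are no constraints.
   Social welfare depends only on the totals [X + Y = sum B], and is strictly concave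
   along this segment with slope (in [Y]) given by the same price difference.  Hence the
   unconstrained equilibrium is the optimum, with [Y = c * sum B]; a constrained
   equilibrium carrying more small-cell bandwidth loses welfare; and every constrained
   equilibrium is at least as good as the corner [X = 0], whose welfare is exactly
   [c ^ alpha] times the optimum and which is reached only when all bandwidth is reserved
   for small cells. *)

Lemma convex_expR_lt (R : realType) (t x y : R) : 0 < t < 1 -> x != y ->
  expR (t * x + (1 - t) * y) < t * expR x + (1 - t) * expR y.
Proof.
move=> /andP[t_gt0 t_lt1] xy; set z := t * x + (1 - t) * y.
have tangent (u : R) : u != 0 -> expR z * (1 + u) < expR (z + u).
  by move=> u0; rewrite (expRD z) ltr_pM2l ?expR_gt0 // expR_gt1Dx.
have t1_gt0 : 0 < 1 - t by rewrite subr_gt0.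
have t_neq0 : t != 0 by rewrite gt_eqF.
have t1_neq0 : 1 - t != 0 by rewrite gt_eqF.
have xz : x - z != 0.
  rewrite (_ : x - z = (1 - t) * (x - y)); last by rewrite /z; ring.
  by rewrite mulf_neq0 // subr_eq0.
have yz : y - z != 0.
  rewrite (_ : y - z = t * (y - x)); last by rewrite /z; ring.
  by rewrite mulf_neq0 // subr_eq0 eq_sym.
have := tangent _ xz; have := tangent _ yz; rewrite !(addrC z) !subrK => ey ex.
have ez : t * (expR z * (1 + (x - z))) + (1 - t) * (expR z * (1 + (y - z))) = expR z.
  by rewrite /z; ring.
have := ltr_pM2l t_gt0 (expR z * (1 + (x - z))) (expR x).
have := ltr_pM2l t1_gt0 (expR z * (1 + (y - z))) (expR y).
rewrite ex ey; lra.
Qed.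

Section Price.
Variables (R : realType) (a : R).

Lemma price_gt0 (x : R) : 0 < x -> 0 < price a x.
Proof. exact: powR_gt0. Qed.

Lemma mulr_price (x : R) : a < 1 -> 0 <= x -> x * price a x = x `^ (1 - a).
Proof.
move=> a_lt1 x_ge0; have b_gt0 : 0 < 1 - a by lra.
by rewrite /price -(mulr_powRB1 x_ge0 b_gt0); congr (_ * _ `^ _); ring.
Qed.

Lemma util_price (r : R) : a < 1 -> 0 <= r -> util a r = r * price a r / (1 - a).
Proof. by move=> a_lt1 r_ge0; rewrite /util mulr_price. Qed.

Lemma ger_price (t T : R) : 0 <= a -> 0 < t -> t <= T -> price a T <= price a t.
Proof.
move=> a_ge0 t_gt0 tT; rewrite /price !powRN lef_pV2 ?posrE ?powR_gt0 //; try lra.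
by apply: (ge0_ler_powR a_ge0); rewrite ?nnegrE; lra.
Qed.

Lemma price_ge_tangent (t T : R) : 0 <= a -> 0 < t -> 0 < T ->
  price a T - a * price a T / T * (t - T) <= price a t.
Proof.
move=> a_ge0 t_gt0 T_gt0; have r_gt0 : 0 < t / T by exact: divr_gt0.
have -> : price a t = price a T * price a (t / T).
  by rewrite /price -powRM ?ltW // mulrC divfK ?gt_eqF.
have -> : price a T - a * price a T / T * (t - T)
    = price a T * (1 - a * (t / T - 1)) by field; lra.
rewrite ler_pM2l ?price_gt0 // /price /powR gt_eqF //.
have ln_le : ln (t / T) <= t / T - 1.
  by have := @le_ln1Dx _ (t / T - 1); rewrite subrKC; apply; lra.
have := expR_ge1Dx (- a * ln (t / T)).
have := ler_wpM2l a_ge0 ln_le; lra.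
Qed.

Lemma price_large_near0 (M : R) : 0 < a ->
  exists2 e, 0 < e & forall t, 0 < t -> t <= e -> M <= price a t.
Proof.
move=> a_gt0; have M1_gt0 : 0 < Num.max M 1 by rewrite lt_max ltr01 orbT.
exists (Num.max M 1 `^ (- a^-1)); first exact: powR_gt0.
move=> t t_gt0 te; apply: le_trans (ger_price (ltW a_gt0) t_gt0 te).
rewrite /price -powRrM mulrNN mulVf ?gt_eqF // powRr1 ?(ltW M1_gt0) //.
by rewrite le_max lexx.
Qed.

Lemma mul_price_lt (m X e : R) : a < 1 -> 0 <= m -> m <= X -> 0 < e ->
  m * price a X < (m + e) * price a (X + e).
Proof.
move=> a_lt1 m_ge0 mX e_gt0; have Xe_gt0 : 0 < X + e by lra.
have [->|m_neq0] := eqVneq m 0.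
  by rewrite mul0r add0r mulr_gt0 ?price_gt0.
have m_gt0 : 0 < m by rewrite lt_neqAle eq_sym m_neq0.
have X_gt0 : 0 < X by lra.
have grow : X * price a X < (X + e) * price a (X + e).
  by rewrite !mulr_price ?gt0_ltr_powR ?nnegrE; lra.
have share : m / X <= (m + e) / (X + e).
  by rewrite ler_pdivrMr // mulrAC ler_pdivlMr //; nra.
have -> : m * price a X = m / X * (X * price a X) by field; lra.
have -> : (m + e) * price a (X + e) = (m + e) / (X + e) * ((X + e) * price a (X + e)).
  by field; lra.
apply: (lt_le_trans (_ : _ < m / X * ((X + e) * price a (X + e)))).
  by rewrite ltr_pM2l ?divr_gt0.
by rewrite ler_wpM2r // mulr_ge0 ?ltW ?price_gt0.
Qed.

Lemma util_lt_tangent (t T : R) : 0 < a < 1 -> 0 <= t -> 0 < T -> t != T ->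
  util a t < util a T + price a T * (t - T).
Proof.
move=> /andP[a_gt0 a_lt1] t_ge0 T_gt0 tT.
rewrite (util_price a_lt1 t_ge0) (util_price a_lt1 (ltW T_gt0)).
have pT_gt0 := price_gt0 T_gt0.
have k_gt0 : 0 < T * price a T / (1 - a) by rewrite divr_gt0 ?mulr_gt0; lra.
have -> : T * price a T / (1 - a) + price a T * (t - T)
    = T * price a T / (1 - a) * ((1 - a) * (t / T) + a) by field; lra.
have [->|t_neq0] := eqVneq t 0; first by rewrite !mul0r mulr0 add0r mulr_gt0.
have r_gt0 : 0 < t / T by rewrite divr_gt0 // lt_neqAle eq_sym t_neq0.
have ln_neq0 : ln (t / T) != 0.
  rewrite ln_eq0 //; apply: contra tT => /eqP tT1.
  by rewrite -(divfK (lt0r_neq0 T_gt0) t) tT1 mul1r.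
have -> : t * price a t / (1 - a) = T * price a T / (1 - a) * (t / T) `^ (1 - a).
  rewrite (mulr_price a_lt1 t_ge0) (mulr_price a_lt1 (ltW T_gt0)) mulrAC.
  by rewrite -powRM ?(ltW T_gt0) ?(ltW r_gt0) // [T * _]mulrC divfK ?lt0r_neq0.
rewrite ltr_pM2l // /powR (gt_eqF r_gt0).
have b_in01 : 0 < 1 - a < 1 by rewrite subr_gt0 a_lt1 ltrBlDr ltrDl.
have := convex_expR_lt b_in01 ln_neq0 (y := 0).
by rewrite mulr0 addr0 expR0 lnK //; lra.
Qed.

End Price.

Lemma le0_of_le_mul_small (R : realFieldType) (L C D : R) : 0 < D ->
  (forall d, 0 < d -> d <= D -> L <= C * d) -> L <= 0.
Proof.
move=> D_gt0 small; rewrite leNgt; apply/negP => L_gt0.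
have C_gt0 : 0 < C by have := small D D_gt0 (lexx D); nra.
pose d := Num.min D (L / (2 * C)).
have d_gt0 : 0 < d by rewrite lt_min D_gt0 divr_gt0 ?mulr_gt0.
have dD : d <= D by rewrite ge_min lexx.
have := small d d_gt0 dD.
have : C * d <= C * (L / (2 * C)) by rewrite ler_pM2l // ge_min lexx orbT.
have -> : C * (L / (2 * C)) = L / 2 by field; lra.
lra.
Qed.

Definition split_revenue (R : realType) (a w1 w2 x1 x2 T1 T2 : R) :=
  w1 * x1 * price a T1 + w2 * x2 * price a T2.

(* The derivative at [d = 0] of [w * (x + d) * price a (T + d)]: the marginal revenue
   of holding [x] out of a market total [T]. *)
Definition marginal_revenue (R : realType) (a w x T : R) :=
  w * price a T * (1 - a * x / T).

Definition shift_unprofitable (R : realType) (a w1 w2 x1 x2 T1 T2 D : R) :=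
  forall d, 0 < d -> d <= D ->
    split_revenue a w1 w2 (x1 - d) (x2 + d) (T1 - d) (T2 + d)
      <= split_revenue a w1 w2 x1 x2 T1 T2.

Section Shift.
Variables (R : realType) (a w1 w2 x1 x2 T1 T2 D : R).

Lemma shift_target_gt0 : 0 < a -> 0 <= w1 -> 0 < w2 ->
  0 <= x2 <= T2 -> 0 < D <= x1 -> x1 <= T1 ->
  shift_unprofitable a w1 w2 x1 x2 T1 T2 D -> 0 < T2.
Proof.
move=> a_gt0 w1_ge0 w2_gt0 /andP[x2_ge0 x2T2] /andP[D_gt0 Dx1] x1T1 no_gain.
rewrite ltNge; apply/negP => T2_le0.
have [x2_0 T2_0] : x2 = 0 /\ T2 = 0 by split; lra.
(* Shifting [d] into the empty market earns [w2 * d * price a d], which beats the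
   linear loss [w1 * d * price a T1] for small [d] since [price a d] blows up. *)
pose Q := price a T1.
have [e e_gt0 large] := price_large_near0 (w1 * Q / w2 + 1) a_gt0.
pose d := Num.min e (D / 2).
have d_gt0 : 0 < d by rewrite lt_min e_gt0 divr_gt0.
have de : d <= e by rewrite ge_min lexx.
have dD : d <= D / 2 by rewrite ge_min lexx orbT.
have := no_gain d d_gt0 ltac:(lra).
rewrite /split_revenue x2_0 T2_0 !add0r mulr0 mul0r addr0.
have Q_le : Q <= price a (T1 - d) by apply: ger_price; lra.
have : w1 * (x1 - d) * Q <= w1 * (x1 - d) * price a (T1 - d).
  by apply: ler_wpM2l => //; apply: mulr_ge0; lra.
have : w2 * d * (w1 * Q / w2 + 1) <= w2 * d * price a d.
  by apply: ler_wpM2l (large d d_gt0 de); apply: mulr_ge0; lra.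
have -> : w2 * d * (w1 * Q / w2 + 1) = w1 * d * Q + w2 * d by field; lra.
have : 0 < w2 * d by apply: mulr_gt0.
rewrite /Q; lra.
Qed.

Lemma shift_marginal_le : 0 < a -> 0 <= w1 -> 0 < w2 ->
  0 <= x2 <= T2 -> 0 < D <= x1 -> x1 <= T1 ->
  shift_unprofitable a w1 w2 x1 x2 T1 T2 D ->
  marginal_revenue a w2 x2 T2 <= marginal_revenue a w1 x1 T1.
Proof.
move=> a_gt0 w1_ge0 w2_gt0 x2_in D_in x1T1 no_gain.
have T2_gt0 := shift_target_gt0 a_gt0 w1_ge0 w2_gt0 x2_in D_in x1T1 no_gain.
move: x2_in D_in => /andP[x2_ge0 x2T2] /andP[D_gt0 Dx1].
have T1_gt0 : 0 < T1 by lra.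
pose Q1 := price a T1; pose Q2 := price a T2.
rewrite /marginal_revenue -subr_le0 -/Q1 -/Q2.
apply: (@le0_of_le_mul_small _ _ (a * (w2 * Q2 / T2 + w1 * Q1 / T1)) (D / 2)); first lra.
move=> d d_gt0 dD; rewrite -(ler_pM2l d_gt0).
(* Tangent lines of the convex [price a] turn [no_gain] into [d * L <= d * (C * d)]. *)
have lb2 : Q2 - a * Q2 / T2 * d <= price a (T2 + d).
  have := price_ge_tangent (ltW a_gt0) (_ : 0 < T2 + d) T2_gt0.
  by rewrite addrAC subrr add0r; apply; lra.
have lb1 : Q1 + a * Q1 / T1 * d <= price a (T1 - d).
  have := price_ge_tangent (ltW a_gt0) (_ : 0 < T1 - d) T1_gt0.
  by rewrite addrAC subrr add0r mulrN opprK; apply; lra.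
have : w2 * (x2 + d) * (Q2 - a * Q2 / T2 * d) <= w2 * (x2 + d) * price a (T2 + d).
  by apply: ler_wpM2l lb2; apply: mulr_ge0; lra.
have : w1 * (x1 - d) * (Q1 + a * Q1 / T1 * d) <= w1 * (x1 - d) * price a (T1 - d).
  by apply: ler_wpM2l lb1; apply: mulr_ge0; lra.
have := no_gain d d_gt0 ltac:(lra); rewrite /split_revenue -/Q1 -/Q2.
have expand : w2 * (x2 + d) * (Q2 - a * Q2 / T2 * d) + w1 * (x1 - d) * (Q1 + a * Q1 / T1 * d)
    = w1 * x1 * Q1 + w2 * x2 * Q2
      + d * (w2 * Q2 * (1 - a * x2 / T2) - w1 * Q1 * (1 - a * x1 / T1))
      - d * (a * (w2 * Q2 / T2 + w1 * Q1 / T1) * d).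
  by field; lra.
lra.
Qed.

End Shift.

Lemma ler_sum_term (R : numDomainType) (n : nat) (F : 'I_n -> R) (i : 'I_n) :
  (forall j, 0 <= F j) -> F i <= \sum_(j < n) F j.
Proof. by move=> F_ge0; rewrite (bigD1 i) //= lerDl sumr_ge0. Qed.

Lemma price_le_of_marginal_le (R : realType) (n : nat) (a w1 w2 : R) (x y : 'I_n -> R) :
  0 < a < 1 -> 0 <= w1 ->
  (forall i, 0 <= x i) -> (forall i, 0 <= y i) -> (forall i, 0 < x i + y i) ->
  0 < \sum_(i < n) x i -> 0 < \sum_(i < n) y i ->
  (forall i, 0 < x i -> marginal_revenue a w2 (y i) (\sum_(j < n) y j)
                          <= marginal_revenue a w1 (x i) (\sum_(j < n) x j)) ->
  w2 * price a (\sum_(i < n) y i) <= w1 * price a (\sum_(i < n) x i).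
Proof.
case: n x y => [|n] x y; first by move=> _ _ _ _ _; rewrite big_ord0 ltxx.
move=> /andP[a_gt0 a_lt1] w1_ge0 x_ge0 y_ge0 xy_gt0 X_gt0 Y_gt0 marg.
(* Otherwise [x i / sum x < y i / sum y] for every [i], and summing gives [1 < 1]. *)
rewrite leNgt; apply/negP => P12.
set X := \sum_(i < n.+1) x i in X_gt0 marg P12 *.
set Y := \sum_(i < n.+1) y i in Y_gt0 marg P12 *.
have P1_ge0 : 0 <= w1 * price a X by apply: mulr_ge0 => //; apply/ltW/price_gt0.
have P2_gt0 : 0 < w2 * price a Y by lra.
have share_lt i : x i / X < y i / Y.
  have [xi_gt0|xi_le0] := ltP 0 (x i); last first.
    have -> : x i = 0 by have := x_ge0 i; lra.
    by rewrite mul0r divr_gt0 //; have := xy_gt0 i; lra.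
  have share_le1 : x i / X <= 1 by rewrite ler_pdivrMr // mul1r ler_sum_term.
  have := marg i xi_gt0; rewrite /marginal_revenue -!(mulrA a).
  have : 0 < 1 - a * (x i / X) by nra.
  set u := x i / X; set v := y i / Y => pos le.
  have : w2 * price a Y * (1 - a * v) < w2 * price a Y * (1 - a * u).
    by apply: le_lt_trans le _; rewrite ltr_pM2r.
  by rewrite ltr_pM2l // ltrD2l ltrN2 ltr_pM2l.
have nonempty : has predT (index_enum 'I_n.+1).
  by apply/hasP; exists ord0; rewrite ?mem_index_enum.
have := ltr_sum nonempty (fun i _ => share_lt i).
by rewrite -!mulr_suml !divff ?lt0r_neq0 // ltxx.
Qed.

Lemma split_revenueC (R : realType) (a w1 w2 x1 x2 T1 T2 : R) :
  split_revenue a w1 w2 x1 x2 T1 T2 = split_revenue a w2 w1 x2 x1 T2 T1.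
Proof. exact: addrC. Qed.

Definition totM (R : realType) (n : nat) (p : profile R n) := \sum_(j < n) (p j).1.
Definition totS (R : realType) (n : nat) (p : profile R n) := \sum_(j < n) (p j).2.

Section BandwidthGame.
Variables (R : realType) (R0 lamS Nm Nf alpha : R).
Hypotheses (R0_gt0 : 0 < R0) (lamS_gt0 : 0 < lamS) (Nm_gt0 : 0 < Nm) (Nf_gt0 : 0 < Nf).
Hypotheses (alpha_gt0 : 0 < alpha) (alpha_lt1 : alpha < 1).

Definition weightM := R0 * price alpha (R0 / Nm).
Definition weightS := lamS * R0 * price alpha (lamS * R0 / Nf).

Lemma weightM_gt0 : 0 < weightM.
Proof. by rewrite mulr_gt0 ?price_gt0 ?divr_gt0. Qed.

Lemma weightS_gt0 : 0 < weightS.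
Proof. by rewrite !mulr_gt0 ?price_gt0 ?divr_gt0 ?mulr_gt0. Qed.

Lemma weightM_price (X : R) : 0 <= X ->
  weightM * price alpha X = R0 * price alpha (R0 * X / Nm).
Proof.
move=> X_ge0; rewrite /weightM /price -mulrA -powRM ?divr_ge0 ?(ltW R0_gt0) ?(ltW Nm_gt0) //.
by rewrite mulrAC.
Qed.

Lemma weightS_price (Y : R) : 0 <= Y ->
  weightS * price alpha Y = lamS * R0 * price alpha (lamS * R0 * Y / Nf).
Proof.
move=> Y_ge0; have lR0_gt0 : 0 < lamS * R0 by exact: mulr_gt0.
rewrite /weightS /price -mulrA -powRM ?divr_ge0 ?(ltW lR0_gt0) ?(ltW Nf_gt0) //.
by rewrite [lamS * R0 / Nf * Y]mulrAC.
Qed.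

Lemma revenueE (n : nat) (p : profile R n) (i : 'I_n) : 0 <= totM p -> 0 <= totS p ->
  revenue R0 lamS Nm Nf alpha p i
    = split_revenue alpha weightM weightS (p i).1 (p i).2 (totM p) (totS p).
Proof.
move=> X_ge0 Y_ge0; rewrite /split_revenue (mulrAC weightM) (mulrAC weightS).
rewrite weightM_price // weightS_price // /revenue /rateM /rateS /totM /totS; ring.
Qed.

Lemma feasible_totM_ge0 (n : nat) (B B0 : 'I_n -> R) (q : profile R n) :
  (forall j, feasible (B j) (B0 j) (q j)) -> 0 <= totM q.
Proof. by move=> q_feas; apply: sumr_ge0 => j _; case: (q_feas j). Qed.

Lemma feasible_totS_ge0 (n : nat) (B B0 : 'I_n -> R) (q : profile R n) :
  (forall j, 0 <= B0 j) -> (forall j, feasible (B j) (B0 j) (q j)) -> 0 <= totS q.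
Proof.
move=> B0_ge0 q_feas; apply: sumr_ge0 => j _.
by case: (q_feas j) => _ [+ _]; apply: le_trans.
Qed.

Lemma totM_deviate (n : nat) (p : profile R n) (i : 'I_n) (s : R * R) :
  totM (deviate p i s) = totM p - (p i).1 + s.1.
Proof.
rewrite /totM (bigD1 i) //= [in RHS](bigD1 i) //= /deviate eqxx.
by rewrite (eq_bigr (fun j => (p j).1)) => [|j /negbTE ->]; first ring.
Qed.

Lemma totS_deviate (n : nat) (p : profile R n) (i : 'I_n) (s : R * R) :
  totS (deviate p i s) = totS p - (p i).2 + s.2.
Proof.
rewrite /totS (bigD1 i) //= [in RHS](bigD1 i) //= /deviate eqxx.
by rewrite (eq_bigr (fun j => (p j).2)) => [|j /negbTE ->]; first ring.
Qed.

Section Equilibrium.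
Variables (n : nat) (B B0 : 'I_n -> R) (p : profile R n).
Hypotheses (B0_ge0 : forall i, 0 <= B0 i) (p_NE : is_NE R0 lamS Nm Nf alpha B B0 p).

Lemma ne_no_gain (i : 'I_n) (s : R * R) : feasible (B i) (B0 i) s ->
  split_revenue alpha weightM weightS s.1 s.2 (totM p - (p i).1 + s.1) (totS p - (p i).2 + s.2)
    <= split_revenue alpha weightM weightS (p i).1 (p i).2 (totM p) (totS p).
Proof.
move=> s_feas; have [p_feas p_best] := p_NE.
have dev_feas j : feasible (B j) (B0 j) (deviate p i s j).
  by rewrite /deviate; case: eqP => [->|_].
have := p_best i s s_feas.
rewrite !revenueE ?(feasible_totM_ge0 p_feas) ?(feasible_totS_ge0 B0_ge0 p_feas)
  ?(feasible_totM_ge0 dev_feas) ?(feasible_totS_ge0 B0_ge0 dev_feas) //.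
by rewrite totM_deviate totS_deviate /deviate eqxx.
Qed.

Lemma ne_macro_le_totM (i : 'I_n) : (p i).1 <= totM p.
Proof. by apply: ler_sum_term => j; case: (p_NE.1 j). Qed.

Lemma ne_small_le_totS (i : 'I_n) : (p i).2 <= totS p.
Proof.
apply: (ler_sum_term (F := fun j => (p j).2)) => j.
by case: (p_NE.1 j) => _ [+ _]; apply: le_trans.
Qed.

Lemma ne_full_use (i : 'I_n) : (p i).1 + (p i).2 = B i.
Proof.
have [m_ge0 [B0s mB]] := p_NE.1 i.
apply/eqP; rewrite eq_le mB /= leNgt; apply/negP => slack.
pose e := B i - (p i).1 - (p i).2.
have e_gt0 : 0 < e by rewrite /e; lra.
have s_feas : feasible (B i) (B0 i) ((p i).1 + e, (p i).2).
  by rewrite /feasible /e /=; split; [|split]; lra.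
have := mul_price_lt alpha_lt1 m_ge0 (ne_macro_le_totM i) e_gt0.
rewrite -(ltr_pM2l weightM_gt0) => gain.
have := ne_no_gain s_feas; rewrite /split_revenue /= subrK.
have -> : totM p - (p i).1 + ((p i).1 + e) = totM p + e by ring.
lra.
Qed.

Lemma ne_total : totM p + totS p = \sum_(i < n) B i.
Proof. by rewrite /totM /totS -big_split; apply: eq_bigr => i _; apply: ne_full_use. Qed.

Lemma ne_marginal_MS (i : 'I_n) : 0 < (p i).1 ->
  0 < totS p /\ marginal_revenue alpha weightS (p i).2 (totS p)
                  <= marginal_revenue alpha weightM (p i).1 (totM p).
Proof.
move=> m_gt0; have [m_ge0 [B0s mB]] := p_NE.1 i.
have s_in : 0 <= (p i).2 <= totS p.
  by rewrite ne_small_le_totS andbT (le_trans (B0_ge0 i) B0s).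
have D_in : 0 < (p i).1 <= (p i).1 by rewrite m_gt0 lexx.
have no_gain : shift_unprofitable alpha weightM weightS (p i).1 (p i).2 (totM p) (totS p) (p i).1.
  move=> d d_gt0 dm.
  have s_feas : feasible (B i) (B0 i) ((p i).1 - d, (p i).2 + d).
    by rewrite /feasible /=; split; [|split]; lra.
  have := ne_no_gain s_feas; rewrite /=.
  have -> : totM p - (p i).1 + ((p i).1 - d) = totM p - d by ring.
  by have -> : totS p - (p i).2 + ((p i).2 + d) = totS p + d by ring.
have wM_ge0 := ltW weightM_gt0.
have mM := ne_macro_le_totM i.
split; first exact: shift_target_gt0 alpha_gt0 wM_ge0 weightS_gt0 s_in D_in mM no_gain.
exact: shift_marginal_le alpha_gt0 wM_ge0 weightS_gt0 s_in D_in mM no_gain.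
Qed.

Lemma ne_marginal_SM (i : 'I_n) : B0 i < (p i).2 ->
  0 < totM p /\ marginal_revenue alpha weightM (p i).1 (totM p)
                  <= marginal_revenue alpha weightS (p i).2 (totS p).
Proof.
move=> B0s; have [m_ge0 [_ mB]] := p_NE.1 i.
have m_in : 0 <= (p i).1 <= totM p by rewrite m_ge0 ne_macro_le_totM.
have D_in : 0 < (p i).2 - B0 i <= (p i).2.
  by rewrite subr_gt0 B0s gerBl B0_ge0.
have no_gain : shift_unprofitable alpha weightS weightM
    (p i).2 (p i).1 (totS p) (totM p) ((p i).2 - B0 i).
  move=> d d_gt0 dB0.
  have s_feas : feasible (B i) (B0 i) ((p i).1 + d, (p i).2 - d).
    by rewrite /feasible /=; split; [|split]; lra.
  have := ne_no_gain s_feas; rewrite /= split_revenueC [in X in _ <= X]split_revenueC.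
  have -> : totM p - (p i).1 + ((p i).1 + d) = totM p + d by ring.
  by have -> : totS p - (p i).2 + ((p i).2 - d) = totS p - d by ring.
have wS_ge0 := ltW weightS_gt0.
have sS := ne_small_le_totS i.
split; first exact: shift_target_gt0 alpha_gt0 wS_ge0 weightM_gt0 m_in D_in sS no_gain.
exact: shift_marginal_le alpha_gt0 wS_ge0 weightM_gt0 m_in D_in sS no_gain.
Qed.

Hypotheses (n_gt0 : (0 < n)%N) (B_gt0 : forall i, 0 < B i).

Lemma ne_totS_gt0 : 0 < totS p.
Proof.
have [[i m_gt0]|no_macro] := pselect (exists i, 0 < (p i).1).
  by case: (ne_marginal_MS m_gt0).
pose i0 := Ordinal n_gt0.
have m0 : (p i0).1 = 0.
  have := (p_NE.1 i0).1; rewrite le_eqVlt => /predU1P[//|m_gt0].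
  by case: no_macro; exists i0.
apply: lt_le_trans (ne_small_le_totS i0).
by have := ne_full_use i0; rewrite m0 add0r => ->.
Qed.

Lemma ne_price_le : 0 < totM p ->
  weightS * price alpha (totS p) <= weightM * price alpha (totM p).
Proof.
move=> X_gt0; have a_in : 0 < alpha < 1 by rewrite alpha_gt0 alpha_lt1.
apply: (price_le_of_marginal_le a_in (ltW weightM_gt0)) X_gt0 ne_totS_gt0 _.
- by move=> j; case: (p_NE.1 j).
- by move=> j; case: (p_NE.1 j) => _ [+ _]; apply: le_trans.
- by move=> j; rewrite ne_full_use.
- by move=> j /ne_marginal_MS[].
Qed.

Lemma ne_totM_eq0 : totM p = 0 <-> forall i, B0 i = B i.
Proof.
split=> [X0 i|B0B].
  have m0 j : (p j).1 = 0.
    apply: (psumr_eq0P (P := predT) (F := fun j => (p j).1)) => // k _.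
    by case: (p_NE.1 k).
  have [_ [B0s _]] := p_NE.1 i.
  have s_eq : (p i).2 = B i by rewrite -ne_full_use m0 add0r.
  apply/eqP; rewrite eq_le -{1}s_eq B0s /= leNgt -{1}s_eq.
  by apply/negP => /ne_marginal_SM[]; rewrite X0 ltxx.
rewrite /totM big1 // => i _.
by case: (p_NE.1 i) => m_ge0 [+ mB]; rewrite B0B; lra.
Qed.

End Equilibrium.

(* [social_welfare p] is convertible to [sw (totM p) (totS p)]. *)
Definition sw (X Y : R) := Nm * util alpha (R0 * X / Nm) + Nf * util alpha (lamS * R0 * Y / Nf).

Definition opt_share :=
  Nf * lamS `^ (alpha^-1 - 1) / (Nf * lamS `^ (alpha^-1 - 1) + Nm).

Lemma swE (X Y : R) : 0 <= X -> 0 <= Y -> sw X Y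
  = (R0 * X * price alpha (R0 * X / Nm) + lamS * R0 * Y * price alpha (lamS * R0 * Y / Nf))
    / (1 - alpha).
Proof.
move=> X_ge0 Y_ge0; have lR0_gt0 : 0 < lamS * R0 by exact: mulr_gt0.
have b_neq0 : 1 - alpha != 0 by rewrite subr_eq0 eq_sym lt_eqF.
rewrite /sw !util_price // ?divr_ge0 ?mulr_ge0 ?(ltW R0_gt0) ?(ltW Nm_gt0) ?(ltW Nf_gt0)
  ?(ltW lamS_gt0) //.
by field; rewrite b_neq0 !lt0r_neq0.
Qed.

Lemma sw_corner_gt0 (T : R) : 0 < T -> 0 < sw 0 T.
Proof.
move=> T_gt0; rewrite swE ?(ltW T_gt0) // mulr0 mul0r add0r divr_gt0 ?subr_gt0 //.
by rewrite !mulr_gt0 ?price_gt0 ?divr_gt0 ?mulr_gt0.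
Qed.

Lemma sw_lt_of_price_le (X1 Y1 X2 Y2 : R) : 0 < X1 -> 0 < Y1 -> 0 <= X2 -> 0 <= Y2 ->
  X1 + Y1 = X2 + Y2 -> Y1 < Y2 ->
  weightS * price alpha Y1 <= weightM * price alpha X1 -> sw X2 Y2 < sw X1 Y1.
Proof.
move=> X1_gt0 Y1_gt0 X2_ge0 Y2_ge0 same_total more_small.
rewrite weightS_price ?(ltW Y1_gt0) // weightM_price ?(ltW X1_gt0) // => marg.
have a_in : 0 < alpha < 1 by rewrite alpha_gt0 alpha_lt1.
have lR0_gt0 : 0 < lamS * R0 by exact: mulr_gt0.
pose rM1 := R0 * X1 / Nm; pose rM2 := R0 * X2 / Nm.
pose rS1 := lamS * R0 * Y1 / Nf; pose rS2 := lamS * R0 * Y2 / Nf.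
have rM1_gt0 : 0 < rM1 by rewrite divr_gt0 ?mulr_gt0.
have rS1_gt0 : 0 < rS1 by rewrite divr_gt0 ?mulr_gt0.
have rM2_ge0 : 0 <= rM2 by rewrite divr_ge0 ?mulr_ge0 // ltW.
have rS2_ge0 : 0 <= rS2 by rewrite divr_ge0 ?mulr_ge0 // ltW.
have dM : rM2 - rM1 = R0 / Nm * (X2 - X1) by rewrite /rM1 /rM2; field; rewrite lt0r_neq0.
have dS : rS2 - rS1 = lamS * R0 / Nf * (Y2 - Y1) by rewrite /rS1 /rS2; field; rewrite lt0r_neq0.
have rM_neq : rM2 != rM1.
  rewrite -subr_eq0 dM mulf_neq0 //; first by rewrite lt0r_neq0 // divr_gt0.
  by rewrite subr_eq0 lt_eqF //; lra.
have rS_neq : rS2 != rS1.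
  rewrite -subr_eq0 dS mulf_neq0 //; first by rewrite lt0r_neq0 // divr_gt0.
  by rewrite subr_eq0 gt_eqF.
(* Strict concavity of [util]: welfare lies strictly below its tangent at [(X1, Y1)],
   whose slope along [X + Y = const] is the price difference bounded by [marg]. *)
have tM : Nm * util alpha rM2 < Nm * (util alpha rM1 + price alpha rM1 * (rM2 - rM1)).
  by rewrite ltr_pM2l // util_lt_tangent.
have tS : Nf * util alpha rS2 < Nf * (util alpha rS1 + price alpha rS1 * (rS2 - rS1)).
  by rewrite ltr_pM2l // util_lt_tangent.
have first_order : Nm * (price alpha rM1 * (rM2 - rM1)) + Nf * (price alpha rS1 * (rS2 - rS1))
    = (Y2 - Y1) * (lamS * R0 * price alpha rS1 - R0 * price alpha rM1).
  rewrite dM dS (_ : X2 - X1 = Y1 - Y2); last lra.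
  by field; rewrite !lt0r_neq0.
have : (Y2 - Y1) * (lamS * R0 * price alpha rS1 - R0 * price alpha rM1) <= 0.
  by apply: mulr_ge0_le0; rewrite /rS1 /rM1; lra.
rewrite /sw -/rM1 -/rM2 -/rS1 -/rS2; lra.
Qed.

Lemma sw_corner_leif (X Y : R) : 0 <= X -> 0 < Y ->
  (0 < X -> weightS * price alpha Y <= weightM * price alpha X) ->
  sw 0 (X + Y) <= sw X Y ?= iff (X == 0).
Proof.
move=> X_ge0 Y_gt0 marg; apply/leifP.
have [->|X_neq0] := eqVneq X 0; first by rewrite add0r.
have X_gt0 : 0 < X by rewrite lt_neqAle eq_sym X_neq0.
by apply: sw_lt_of_price_le; rewrite ?add0r ?ltrDr //; [lra | apply: marg].
Qed.

Lemma opt_share_gt0 : 0 < opt_share.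
Proof.
have a_gt0 : 0 < Nf * lamS `^ (alpha^-1 - 1) by rewrite mulr_gt0 ?powR_gt0.
by rewrite divr_gt0 // addr_gt0.
Qed.

Lemma price_powR_inv (r : R) : 0 <= r -> price alpha r `^ (- alpha^-1) = r.
Proof. by move=> r_ge0; rewrite /price -powRrM mulrNN mulfV ?gt_eqF // powRr1. Qed.

Lemma balanced_share (X Y : R) : 0 < X -> 0 < Y ->
  weightS * price alpha Y = weightM * price alpha X -> Y = opt_share * (X + Y).
Proof.
move=> X_gt0 Y_gt0; rewrite weightS_price ?(ltW Y_gt0) // weightM_price ?(ltW X_gt0) // => bal.
have rM_ge0 : 0 <= R0 * X / Nm by rewrite divr_ge0 ?mulr_ge0 // ltW.
have rS_ge0 : 0 <= lamS * R0 * Y / Nf by rewrite divr_ge0 ?mulr_ge0 // ltW.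
have bal' : lamS * price alpha (lamS * R0 * Y / Nf) = price alpha (R0 * X / Nm).
  by apply: (mulfI (lt0r_neq0 R0_gt0)); rewrite -bal; ring.
have := congr1 (fun z => z `^ (- alpha^-1)) bal'.
rewrite /= powRM ?(ltW lamS_gt0) ?powR_ge0 // !price_powR_inv // => rates.
have lamS_pow : lamS `^ (alpha^-1 - 1) * lamS `^ (- alpha^-1) * lamS = 1.
  rewrite powRB ?(lt0r_neq0 lamS_gt0) ?implybT // powRr1 ?(ltW lamS_gt0) // powRN.
  by field; rewrite lt0r_neq0 ?powR_gt0 // lt0r_neq0.
have cross : Nf * lamS `^ (alpha^-1 - 1) * X = Nm * Y.
  have -> : X = Nm / R0 * (R0 * X / Nm) by field; rewrite !lt0r_neq0.
  rewrite -rates -[RHS]mulr1 -[X in _ = _ * X]lamS_pow.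
  by field; rewrite !lt0r_neq0.
have den_gt0 : 0 < Nf * lamS `^ (alpha^-1 - 1) + Nm by rewrite addr_gt0 ?mulr_gt0 ?powR_gt0.
rewrite /opt_share; apply: (mulIf (lt0r_neq0 den_gt0)).
by rewrite mulrAC divfK ?lt0r_neq0 // [in RHS]mulrDr cross; ring.
Qed.

Lemma sw_corner_balanced (X Y : R) : 0 < X -> 0 < Y ->
  weightS * price alpha Y = weightM * price alpha X ->
  sw 0 (X + Y) = opt_share `^ alpha * sw X Y.
Proof.
move=> X_gt0 Y_gt0 bal; have Y_eq := balanced_share X_gt0 Y_gt0 bal.
have T_gt0 : 0 < X + Y by lra.
have b_neq0 : 1 - alpha != 0 by rewrite subr_eq0 eq_sym lt_eqF.
have c_gt0 := opt_share_gt0.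
move: bal; rewrite weightS_price ?(ltW Y_gt0) // weightM_price ?(ltW X_gt0) // => bal.
rewrite !swE ?(ltW X_gt0) ?(ltW Y_gt0) ?(ltW T_gt0) // mulr0 mul0r add0r.
have -> : R0 * X * price alpha (R0 * X / Nm)
    = X * (lamS * R0 * price alpha (lamS * R0 * Y / Nf)) by rewrite bal; ring.
have -> : price alpha (lamS * R0 * Y / Nf)
    = opt_share `^ (- alpha) * price alpha (lamS * R0 * (X + Y) / Nf).
  rewrite /price -powRM ?(ltW c_gt0) ?divr_ge0 ?mulr_ge0 ?(ltW T_gt0) ?(ltW R0_gt0)
    ?(ltW lamS_gt0) ?(ltW Nf_gt0) //.
  by congr (_ `^ _); rewrite {1}Y_eq; field; rewrite lt0r_neq0.
by rewrite powRN; field; rewrite b_neq0 lt0r_neq0 ?powR_gt0.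
Qed.

Section Comparison.
Variables (n : nat) (B B0 : 'I_n -> R) (pw pwo : profile R n).
Hypotheses (n_gt0 : (0 < n)%N) (B_gt0 : forall i, 0 < B i) (B0_ge0 : forall i, 0 <= B0 i).
Hypothesis pw_NE : is_NE R0 lamS Nm Nf alpha B B0 pw.
Hypothesis pwo_NE : is_NE R0 lamS Nm Nf alpha B (fun=> 0) pwo.

Let zero_ge0 (i : 'I_n) : 0 <= (fun=> 0 : R) i := lexx 0.

Lemma ne0_totM_gt0 : 0 < totM pwo.
Proof.
have [[i s_gt0]|no_small] := pselect (exists i, 0 < (pwo i).2).
  by case: (ne_marginal_SM zero_ge0 pwo_NE s_gt0).
pose i0 := Ordinal n_gt0.
have s0 : (pwo i0).2 = 0.
  have := (pwo_NE.1 i0).2.1; rewrite le_eqVlt => /predU1P[//|s_gt0].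
  by case: no_small; exists i0.
apply: lt_le_trans (ne_macro_le_totM pwo_NE i0).
by have := ne_full_use zero_ge0 pwo_NE i0; rewrite s0 addr0 => ->.
Qed.

Lemma ne0_price_eq : weightS * price alpha (totS pwo) = weightM * price alpha (totM pwo).
Proof.
have X_gt0 := ne0_totM_gt0.
apply/eqP; rewrite eq_le (ne_price_le zero_ge0 pwo_NE n_gt0 B_gt0 X_gt0) /=.
have a_in : 0 < alpha < 1 by rewrite alpha_gt0 alpha_lt1.
apply: (price_le_of_marginal_le a_in (ltW weightS_gt0))
  (ne_totS_gt0 zero_ge0 pwo_NE n_gt0 B_gt0) X_gt0 _.
- by move=> j; case: (pwo_NE.1 j) => _ [+ _].
- by move=> j; case: (pwo_NE.1 j).
- by move=> j; rewrite addrC (ne_full_use zero_ge0 pwo_NE).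
- by move=> j /(ne_marginal_SM zero_ge0 pwo_NE)[].
Qed.

Lemma ne0_totS_share : totS pwo = opt_share * \sum_(i < n) B i.
Proof.
rewrite -(ne_total zero_ge0 pwo_NE).
exact: balanced_share ne0_totM_gt0
  (ne_totS_gt0 zero_ge0 pwo_NE n_gt0 B_gt0) ne0_price_eq.
Qed.

Lemma ne0_sw_corner :
  sw 0 (\sum_(i < n) B i) = opt_share `^ alpha * social_welfare R0 lamS Nm Nf alpha pwo.
Proof.
rewrite -(ne_total zero_ge0 pwo_NE).
exact: sw_corner_balanced ne0_totM_gt0
  (ne_totS_gt0 zero_ge0 pwo_NE n_gt0 B_gt0) ne0_price_eq.
Qed.

Lemma ne_sw_corner_leif :
  sw 0 (\sum_(i < n) B i) <= social_welfare R0 lamS Nm Nf alpha pw ?= iff (totM pw == 0).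
Proof.
rewrite -(ne_total B0_ge0 pw_NE).
exact: sw_corner_leif (feasible_totM_ge0 pw_NE.1) (ne_totS_gt0 B0_ge0 pw_NE n_gt0 B_gt0)
  (ne_price_le B0_ge0 pw_NE n_gt0 B_gt0).
Qed.

Lemma ne_sw_lt_ne0 : totS pwo < totS pw ->
  social_welfare R0 lamS Nm Nf alpha pw < social_welfare R0 lamS Nm Nf alpha pwo.
Proof.
move=> more_small.
apply: (sw_lt_of_price_le ne0_totM_gt0
  (ne_totS_gt0 zero_ge0 pwo_NE n_gt0 B_gt0) (feasible_totM_ge0 pw_NE.1)) => //.
- exact: feasible_totS_ge0 B0_ge0 pw_NE.1.
- by rewrite (ne_total zero_ge0 pwo_NE) (ne_total B0_ge0 pw_NE).
- by rewrite ne0_price_eq.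
Qed.

Lemma ne0_sw_gt0 : 0 < social_welfare R0 lamS Nm Nf alpha pwo.
Proof.
have Bt_gt0 : 0 < \sum_(i < n) B i.
  by apply: lt_le_trans (B_gt0 (Ordinal n_gt0)) (ler_sum_term _ _) => j; apply: ltW.
have := sw_corner_gt0 Bt_gt0.
by rewrite ne0_sw_corner pmulr_rgt0 // powR_gt0 // opt_share_gt0.
Qed.

End Comparison.

End BandwidthGame.

Theorem theorem3 (R : realType) (n : nat) (hn : (0 < n)%N)
  (R0 lamS Nm Nf alpha : R) (B B0 : 'I_n -> R)
  (hR0 : 0 < R0) (hlam : 1 < lamS) (hNm : 0 < Nm) (hNf : 0 < Nf)
  (ha0 : 0 < alpha) (ha1 : alpha < 1)
  (hB : forall i, 0 < B i) (hB0 : forall i, 0 <= B0 i <= B i)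
  (pw pwo : profile R n)
  (Hw : is_NE R0 lamS Nm Nf alpha B B0 pw)
  (Hwo : is_NE R0 lamS Nm Nf alpha B (fun _ => 0) pwo) :
  let a := Nf * lamS `^ (alpha^-1 - 1) in
  let c := a / (a + Nm) in
  let SWw := social_welfare R0 lamS Nm Nf alpha pw in
  let SWwo := social_welfare R0 lamS Nm Nf alpha pwo in
  (c * (\sum_(i < n) B i) < \sum_(i < n) B0 i -> SWw < SWwo) /\
  c `^ alpha <= SWw / SWwo /\
  (SWw / SWwo = c `^ alpha <-> forall i, B0 i = B i).
Proof.
move=> a c SWw SWwo; have hlam0 : 0 < lamS by lra.
have hB0w i : 0 <= B0 i by case/andP: (hB0 i).
have SWwo_gt0 : 0 < SWwo := ne0_sw_gt0 hR0 hlam0 hNm hNf ha0 ha1 hn hB Hwo.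
have corner_le : c `^ alpha * SWwo <= SWw ?= iff (totM pw == 0).
  rewrite /c /a /SWwo -(ne0_sw_corner hR0 hlam0 hNm hNf ha0 ha1 hn hB Hwo).
  exact (ne_sw_corner_leif hR0 hlam0 hNm hNf ha0 ha1 hn hB hB0w Hw).
split; [|split].
- move=> B0_large; apply: (ne_sw_lt_ne0 hR0 hlam0 hNm hNf ha0 ha1 hn hB hB0w Hw Hwo).
  rewrite (ne0_totS_share hR0 hlam0 hNm hNf ha0 ha1 hn hB Hwo) (lt_le_trans B0_large) //.
  by apply: ler_sum => i _; case: (Hw.1 i) => _ [].
- by rewrite ler_pdivlMr // corner_le.1.
- apply: iff_trans (ne_totM_eq0 hR0 hlam0 hNm hNf ha0 ha1 hB0w Hw); split => [ratio|/eqP X0].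
    by apply/eqP; rewrite -corner_le.2 -ratio divfK ?lt0r_neq0.
  by have := corner_le.2; rewrite X0 => /eqP <-; rewrite mulfK ?lt0r_neq0.
Qed.
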